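(* Let $(a_n)_{n\ge0}$ be the sequence defined by \[ \sum_{n=0}^{\infty}a_nz^n=\frac{1+36z+\sqrt{(1-12z)^3}}{2(1+4z)^2} \] (OEIS A220910). Then for every $n\ge0$, \[ a_n=\frac{1-8n}{2}(-4)^n+\binom{2n}{n}\sum_{k=0}^{n}\frac{3^{n+1}(k+1)\prod_{i=0}^{k-1}(n-i)}{8(-3)^k\prod_{i=0}^{k+1}(n-i-1/2)} \] and \[ a_n=\frac{(-4)^n(1-8n)}{16}\left[8-\sum_{k=0}^{n+1}\frac{(-3)^k}{k!}\prod_{i=0}^{k-1}(i-3/2)\right]+\binom{2n}{n}\frac{3^{n+3}}{32(n+1)}. \]
   Context: The square root is the branch analytic near $z=0$ with value $1$ at $z=0$. Empty products equal $1$. *)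

From HB Require Import structures.
From mathcomp Require Import all_boot all_order all_algebra.
Set Implicit Arguments. Unset Strict Implicit. Unset Printing Implicit Defensive.
Import Order.TTheory GRing.Theory Num.Theory.
Local Open Scope ring_scope.

Definition conv (R : ringType) (f g : nat -> R) (n : nat) : R :=
  \sum_(i < n.+1) f i * g (n - i)%N.

Definition pcoef (R : ringType) (p : {poly R}) : nat -> R := fun n => p`_n.

(* The generating-function hypothesis: s is the power series of
   sqrt((1-12z)^3) (square equals (1-12z)^3, constant term 1, i.e. the
   branch with value 1 at z = 0), and
   2 (1+4z)^2 * A(z) = 1 + 36 z + s(z). *)
Definition is_gf_A220910 (R : fieldType) (a s : nat -> R) : Prop :=
  [/\ s 0%N = 1,
      (forall n, conv s s n = pcoef ((1 - 12 * 'X) ^+ 3) n) &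
      (forall n, conv (pcoef (2 * (1 + 4 * 'X) ^+ 2)) a n
                 = pcoef (1 + 36 * 'X) n + s n)].

(* The coefficients s_n of sqrt((1 - 12z)^3) are (-12)^n binom(3/2, n).  They
   are pinned down by s^2 = (1 - 12z)^3 and s_0 = 1, and are recognised through
   the recurrence (n + 1) s_(n+1) = (12n - 18) s_n, which squares to the
   recurrence of the coefficients of (1 - 12z)^3.  The generating function of
   a_n then amounts to 2 a_(n+2) + 16 a_(n+1) + 32 a_n = s_(n+2) with
   a_0 = a_1 = 1, and the second closed form satisfies it once
   3^k binom(3/2, k) is expressed through the central binomial coefficient
   C(2k, k).  The sum in the first closed form satisfies, after the shift
   k -> k + 1, a first-order recurrence in n, whence by induction it agrees
   with the second form. *)

From HB Require Import structures.
From mathcomp Require Import all_boot all_order all_algebra.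
From mathcomp Require Import ring lra zify.
Import Order.TTheory GRing.Theory Num.Theory.
Local Open Scope ring_scope.

Ltac nonzero := first [ done | assumption | (apply: lt0r_neq0; lra)
  | (apply: ltr0_neq0; lra) | (apply: expf_neq0; nonzero)
  | (apply: mulf_neq0; nonzero) ].
Ltac solve_field := field; try done; repeat (apply/andP; split); try nonzero.

Section Convolution.
Variable R : comRingType.
Implicit Types (f g u : nat -> R) (c d : R).

Lemma eq_conv f g h n : f =1 g -> conv f h n = conv g h n.
Proof. by move=> fg; apply: eq_bigr => i _; rewrite fg. Qed.

Lemma conv_weighted u n :
  2 * \sum_(i < n.+1) i%:R * u i * u (n - i)%N = n%:R * conv u u n.
Proof.
rewrite mulr_natl mulr2n {2}(reindex_inj rev_ord_inj) /= -big_split /conv mulr_sumr.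
apply: eq_bigr => i _ /=.
have le_in : (i <= n)%N by rewrite -ltnS.
by rewrite subSS subKn // natrB //; ring.
Qed.

(* The recurrence is the coefficient form of (1 - c z) u' = d u, which passes
   to w = u^2 as (1 - c z) w' = 2 d w. *)
Lemma conv_sqr_rec c d u :
    (forall n, n.+1%:R * u n.+1 = (c * n%:R + d) * u n) ->
  forall n, n.+1%:R * conv u u n.+1 = (c * n%:R + 2 * d) * conv u u n.
Proof.
move=> urec n; have := conv_weighted u n.+1.
rewrite big_ord_recl /= !mul0r add0r => <-.
have -> : \sum_(i < n.+1) (bump 0 i)%:R * u (bump 0 i) * u (n.+1 - bump 0 i)%N
    = c * \sum_(i < n.+1) i%:R * u i * u (n - i)%N + d * conv u u n.
  rewrite /conv !mulr_sumr -big_split; apply: eq_bigr => i _ /=.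
  by rewrite /bump /= add1n subSS urec; ring.
by rewrite mulrDr mulrCA conv_weighted; ring.
Qed.

Lemma conv_sqrS f n :
  conv f f n.+1 = 2 * f 0%N * f n.+1 + \sum_(i < n) f i.+1 * f (n - i)%N.
Proof.
rewrite /conv big_ord_recl big_ord_recr /= /bump /= !add1n subn0 subnn.
under eq_bigr => i _ do rewrite subSS.
ring.
Qed.

Lemma conv_quadratic c0 c1 c2 u n :
  conv (nth 0 [:: c0; c1; c2]) u n.+2 = c0 * u n.+2 + c1 * u n.+1 + c2 * u n.
Proof.
rewrite /conv !big_ord_recl /= big1 => [|i _]; last by rewrite nth_nil mul0r.
by rewrite /bump /= !add1n !subSS !subn0 addr0 addrA.
Qed.

End Convolution.

Lemma conv_sqr_inj (R : idomainType) (f g : nat -> R) :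
  2 != 0 :> R -> f 0%N = 1 -> g 0%N = 1 -> conv f f =1 conv g g -> f =1 g.
Proof.
move=> two_neq0 f0 g0 fg n; elim/ltn_ind: n => [[|n] IH]; first by rewrite f0 g0.
have := fg n.+1; rewrite !conv_sqrS f0 g0 !mulr1.
under [in RHS]eq_bigr => i _ do rewrite -!IH ?ltnS ?leq_subr //.
by move/addIr/(mulfI two_neq0).
Qed.

Lemma first_order_rec_inj (R : numDomainType) (c d : R) (u v : nat -> R) :
    (forall n, n.+1%:R * u n.+1 = (c * n%:R + d) * u n) ->
    (forall n, n.+1%:R * v n.+1 = (c * n%:R + d) * v n) ->
  u 0%N = v 0%N -> u =1 v.
Proof.
move=> urec vrec uv0; elim=> // n IH.
have Sn_neq0 : n.+1%:R != 0 :> R by rewrite pnatr_eq0.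
by apply: (mulfI Sn_neq0); rewrite urec vrec IH.
Qed.

Section PolynomialCoefficients.
Variable R : comRingType.

Lemma coef_cube_1_12X n :
  ((1 - 12 * 'X) ^+ 3 : {poly R})`_n = [:: 1; -36; 432; -1728]`_n.
Proof.
have -> : (1 - 12 * 'X) ^+ 3 = 1 - 36 * 'X + 432 * 'X^2 - 1728 * 'X^3 :> {poly R}.
  by ring.
rewrite !coefD !coefN !mulr_natl !coefMn coef1 coefX !coefXn.
by case: n => [|[|[|[|n]]]]; rewrite /= ?nth_nil ?mul0rn ?mulr1n; ring.
Qed.

Lemma coef_2_sqr_1_4X n :
  (2 * (1 + 4 * 'X) ^+ 2 : {poly R})`_n = [:: 2; 16; 32]`_n.
Proof.
have -> : 2 * (1 + 4 * 'X) ^+ 2 = 2 + 16 * 'X + 32 * 'X^2 :> {poly R} by ring.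
rewrite !coefD !mulr_natl !coefMn coefC coefX !coefXn.
by case: n => [|[|[|n]]]; rewrite /= ?nth_nil ?mul0rn ?mulr1n; ring.
Qed.

Lemma coef_1_36X n : (1 + 36 * 'X : {poly R})`_n = [:: 1; 36]`_n.
Proof.
rewrite coefD mulr_natl coefMn coef1 coefX.
by case: n => [|[|n]]; rewrite /= ?nth_nil ?mul0rn ?mulr1n; ring.
Qed.

End PolynomialCoefficients.

Section BinomialSeries.
Variable R : realFieldType.

Lemma odd_natr_neq0 (m k : nat) : 2 * m%:R - (2 * k + 1)%:R != 0 :> R.
Proof.
apply/eqP => eq0.
have : (2 * m)%:R = (2 * k + 1)%:R :> R by rewrite natrM; lra.
by move/eqP; rewrite eqr_nat; lia.
Qed.

Lemma natr_sub_half_neq0 (m i : nat) : m%:R - i%:R - 1 / 2 != 0 :> R.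
Proof.
apply: contraNneq (odd_natr_neq0 m i) => eq0.
by rewrite natrD natrM; lra.
Qed.

(* [pow32_coef k] is the coefficient of x^k in (1 + 3x)^(3/2); substituting
   x = -4z gives the coefficients [sqrt_cube_coef k] of sqrt((1 - 12z)^3). *)
Definition pow32_coef k : R := (-3) ^+ k / (k`!)%:R * \prod_(i < k) (i%:R - 3 / 2).
Definition pow32_sum m : R := \sum_(k < m.+1) pow32_coef k.
Definition sqrt_cube_coef k : R := (-4) ^+ k * pow32_coef k.
Definition central_binom n : R := 'C(2 * n, n)%:R.

Lemma pow32_coef0 : pow32_coef 0 = 1.
Proof. by rewrite /pow32_coef big_ord0 expr0 fact0 mulr1 divr1. Qed.

Lemma pow32_coefS k :
  pow32_coef k.+1 = pow32_coef k * (-3) * (k%:R - 3 / 2) / k.+1%:R.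
Proof.
rewrite /pow32_coef big_ord_recr /= factS natrM exprS.
have := fact_gt0 k; rewrite -(ltr0n R) => fact_gt0.
have := ler0n R k => k_ge0.
solve_field.
Qed.

Lemma pow32_sumS m : pow32_sum m.+1 = pow32_sum m + pow32_coef m.+1.
Proof. exact: big_ord_recr. Qed.

Lemma central_binom_neq0 n : central_binom n != 0.
Proof. by rewrite pnatr_eq0 -lt0n bin_gt0; lia. Qed.

Lemma central_binom_fact n : central_binom n * (n`!%:R) ^+ 2 = (2 * n)`!%:R.
Proof.
rewrite -natrX -natrM expnS expn1.
have le_n2n : (n <= 2 * n)%N by lia.
by have := bin_fact le_n2n; rewrite (_ : 2 * n - n = n)%N; [move=> -> | lia].
Qed.

Lemma central_binomS n :
  central_binom n.+1 = 2 * (2 * n%:R + 1) * central_binom n / n.+1%:R.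
Proof.
have := fact_gt0 n; rewrite -(ltr0n R) => fact_gt0.
have := ler0n R n => n_ge0.
have fn : central_binom n = (2 * n)`!%:R / (n`!%:R) ^+ 2.
  by rewrite -central_binom_fact; solve_field.
have fSn : central_binom n.+1
    = (2 * n).+2%:R * ((2 * n).+1%:R * (2 * n)`!%:R) / (n.+1%:R * n`!%:R) ^+ 2.
  have := central_binom_fact n.+1.
  rewrite (_ : 2 * n.+1 = (2 * n).+2)%N; last by lia.
  by rewrite !factS !natrM => <-; solve_field.
by rewrite fn fSn -(natr1 (2 * n).+1) -(natr1 (2 * n)) -(natr1 n) natrM; solve_field.
Qed.

Lemma pow32_coefE m : pow32_coef m =
  3 ^+ m.+1 * central_binom m / ((-4) ^+ m * ((2 * m%:R - 1) * (2 * m%:R - 3))).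
Proof.
elim: m => [|m IH].
  by rewrite pow32_coef0 /central_binom bin0; solve_field.
have := ler0n R m => m_ge0.
have odd1 : 2 * m%:R - 1 != 0 :> R := odd_natr_neq0 m 0.
have odd3 : 2 * m%:R - 3 != 0 :> R := odd_natr_neq0 m 1.
have oddS3 : 2 * (m%:R + 1) - 3 != 0 :> R by rewrite natr1; exact: odd_natr_neq0 m.+1 1.
rewrite pow32_coefS IH central_binomS -(natr1 m) !exprS; solve_field.
Qed.

Lemma sqrt_cube_coef0 : sqrt_cube_coef 0 = 1.
Proof. by rewrite /sqrt_cube_coef pow32_coef0 mulr1. Qed.

Lemma sqrt_cube_coef_rec n :
  n.+1%:R * sqrt_cube_coef n.+1 = (12 * n%:R - 18) * sqrt_cube_coef n.
Proof.
rewrite /sqrt_cube_coef pow32_coefS exprS.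
have := ler0n R n => n_ge0; solve_field.
Qed.

Lemma conv_sqrt_cube_coef n :
  conv sqrt_cube_coef sqrt_cube_coef n = [:: 1; -36; 432; -1728]`_n.
Proof.
apply: (@first_order_rec_inj _ 12 (2 * -18)).
- by apply: conv_sqr_rec => {}n; rewrite sqrt_cube_coef_rec.
- by case=> [|[|[|[|{}n]]]] /=; rewrite ?nth_nil ?mulr0 //; ring.
- by rewrite /conv big_ord1 sqrt_cube_coef0 mulr1.
Qed.

End BinomialSeries.

Section SecondForm.
Variable R : realFieldType.

Definition second_form n : R :=
  (-4) ^+ n * (1 - 8 * n%:R) / 16 * (8 - pow32_sum R n.+1)
  + central_binom R n * 3 ^+ (n + 3) / (32 * (n%:R + 1)).

Lemma second_form_rec n :
  2 * second_form n.+2 + 16 * second_form n.+1 + 32 * second_form n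
  = sqrt_cube_coef R n.+2.
Proof.
rewrite /second_form /sqrt_cube_coef (pow32_sumS _ n.+2) (pow32_sumS _ n.+1).
rewrite (pow32_coefS _ n.+2) (pow32_coefE _ n.+2) !central_binomS.
rewrite -(natr1 n.+1) -(natr1 n) !exprD !exprS expr0.
have := ler0n R n => n_ge0; solve_field.
Qed.

Lemma second_form0 : second_form 0 = 1.
Proof.
rewrite /second_form pow32_sumS /pow32_sum big_ord1 pow32_coefS pow32_coef0.
by rewrite /central_binom bin0; solve_field.
Qed.

Lemma second_form1 : second_form 1 = 1.
Proof.
rewrite /second_form !pow32_sumS /pow32_sum big_ord1 !pow32_coefS pow32_coef0.
by rewrite /central_binom (_ : 'C(2 * 1, 1) = 2)%N //; solve_field.
Qed.

Lemma gf_A220910_second_form (a s : nat -> R) :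
  is_gf_A220910 a s -> a =1 second_form.
Proof.
case=> s0 s_sqr a_gf.
have sE : s =1 sqrt_cube_coef R.
  apply: conv_sqr_inj => [|//||n]; [by nonzero | exact: sqrt_cube_coef0 |].
  by rewrite s_sqr conv_sqrt_cube_coef /pcoef coef_cube_1_12X.
have a_rec n : conv (nth 0 [:: 2; 16; 32]) a n = [:: 1; 36]`_n + s n.
  rewrite -coef_1_36X -[_`_n]/(pcoef _ n) -a_gf.
  by apply: eq_conv => i; rewrite /pcoef coef_2_sqr_1_4X.
have a0 : a 0%N = 1.
  by move: (a_rec 0%N); rewrite /conv big_ord1 s0 /=; lra.
have a1 : a 1%N = 1.
  move: (a_rec 1%N); rewrite /conv !big_ord_recl big_ord0 sE a0.
  by rewrite /sqrt_cube_coef pow32_coefS pow32_coef0 /=; lra.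
suff aE : forall n, a n = second_form n /\ a n.+1 = second_form n.+1.
  by move=> n; case: (aE n).
elim=> [|n [aEn aESn]]; first by rewrite second_form0 second_form1.
split=> //; move: (a_rec n.+2); rewrite conv_quadratic sE aEn aESn -second_form_rec.
by rewrite /= nth_nil; lra.
Qed.

End SecondForm.

Section FirstForm.
Variable R : realFieldType.

Definition falling n k : R := \prod_(i < k) (n%:R - i%:R).
Definition falling_half n k : R := \prod_(i < k.+2) (n%:R - i%:R - 1 / 2).
Definition first_term n k : R :=
  3 ^+ n.+1 * falling n k / (8 * (-3) ^+ k * falling_half n k).
Definition first_sum n : R := \sum_(k < n.+1) first_term n k.
Definition first_sum_weighted n : R := \sum_(k < n.+1) (k%:R + 1) * first_term n k.

Lemma falling_half_neq0 n k : falling_half n k != 0.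
Proof. by apply/prodf_neq0 => i _; apply: natr_sub_half_neq0. Qed.

Lemma fallingSS n k : falling n.+1 k.+1 = (n%:R + 1) * falling n k.
Proof.
rewrite /falling big_ord_recl subr0 natr1; congr (_ * _).
by apply: eq_bigr => i _; rewrite /bump /= ?add1n -!natr1; ring.
Qed.

Lemma falling_halfSS n k : falling_half n.+1 k.+1 = (n%:R + 1 / 2) * falling_half n k.
Proof.
rewrite /falling_half big_ord_recl subr0 -natr1; congr (_ * _); first by field.
by apply: eq_bigr => i _; rewrite /bump /= ?add1n -!natr1; ring.
Qed.

Lemma first_termSS n k :
  first_term n.+1 k.+1 = - (n%:R + 1) / (n%:R + 1 / 2) * first_term n k.
Proof.
have := ler0n R n => n_ge0; have := falling_half_neq0 n k => half_neq0.
by rewrite /first_term fallingSS falling_halfSS !exprS; solve_field.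
Qed.

Lemma first_term_S0 n :
  first_term n.+1 0 = 3 ^+ n.+2 / (8 * ((n%:R + 1 / 2) * (n%:R - 1 / 2))).
Proof.
rewrite /first_term /falling /falling_half big_ord0 !big_ord_recr big_ord0 /=.
have := ler0n R n => n_ge0.
have odd1 : n%:R * 2 - 1 != 0 :> R by rewrite mulrC; exact: odd_natr_neq0 n 0.
by rewrite -(natr1 n) subr0 expr0; solve_field.
Qed.

Lemma first_sumS n :
  first_sum n.+1 = first_term n.+1 0 + - (n%:R + 1) / (n%:R + 1 / 2) * first_sum n.
Proof.
rewrite /first_sum big_ord_recl mulr_sumr; congr (_ + _).
by apply: eq_bigr => i _; rewrite first_termSS.
Qed.

Lemma first_sum_weightedS n : first_sum_weighted n.+1
  = first_term n.+1 0 + - (n%:R + 1) / (n%:R + 1 / 2) * (first_sum_weighted n + first_sum n).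
Proof.
rewrite /first_sum_weighted /first_sum big_ord_recl -big_split mulr_sumr /= add0r mul1r.
congr (_ + _); apply: eq_bigr => i _.
by rewrite /bump /= add1n first_termSS -natr1; ring.
Qed.

Lemma first_sumsE n :
  central_binom R n * first_sum n = (-4) ^+ n * pow32_sum R n / 2 /\
  central_binom R n * first_sum_weighted n
    = - ((-4) ^+ n * (1 - 8 * n%:R)) * pow32_sum R n.+1 / 16
      + central_binom R n * 3 ^+ (n + 3) / (32 * (n%:R + 1)).
Proof.
elim: n => [|n [sumE weightedE]].
  rewrite /first_sum_weighted /first_sum /first_term /falling /falling_half.
  rewrite !big_ord1 big_ord0 !big_ord_recr big_ord0 /=.
  rewrite pow32_sumS /pow32_sum big_ord1 pow32_coefS pow32_coef0 /central_binom bin0.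
  by split; solve_field.
have := ler0n R n => n_ge0.
have odd1 : n%:R * 2 - 1 != 0 :> R by rewrite mulrC; exact: odd_natr_neq0 n 0.
have oddS3 : 2 * (n%:R + 1) - 3 != 0 :> R by rewrite natr1; exact: odd_natr_neq0 n.+1 1.
have := central_binom_neq0 R n => binom_neq0.
have {}sumE : first_sum n = (-4) ^+ n * pow32_sum R n / 2 / central_binom R n.
  by rewrite -sumE; solve_field.
have {}weightedE : first_sum_weighted n
    = (- ((-4) ^+ n * (1 - 8 * n%:R)) * pow32_sum R n.+1 / 16
       + central_binom R n * 3 ^+ (n + 3) / (32 * (n%:R + 1))) / central_binom R n.
  by rewrite -weightedE; solve_field.
rewrite first_sumS first_sum_weightedS first_term_S0 sumE weightedE.
rewrite (pow32_sumS _ n.+1) (pow32_sumS _ n) (pow32_coefS _ n.+1) (pow32_coefE _ n.+1).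
rewrite !central_binomS -(natr1 n) !exprD !exprS expr0.
by split; solve_field.
Qed.

End FirstForm.

Theorem mainTheorem8 (R : realFieldType) (a s : nat -> R) :
  is_gf_A220910 a s ->
  forall n : nat,
    a n = (1 - 8 * n%:R) / 2 * (-4) ^+ n
          + 'C(2 * n, n)%:R *
            \sum_(k < n.+1)
              (3 ^+ n.+1 * (k%:R + 1) * \prod_(i < k) (n%:R - i%:R))
              / (8 * (-3) ^+ k * \prod_(i < k.+2) (n%:R - i%:R - 1 / 2))
    /\
    a n = (-4) ^+ n * (1 - 8 * n%:R) / 16 *
            (8 - \sum_(k < n.+2)
                   (-3) ^+ k / (k`!)%:R * \prod_(i < k) (i%:R - 3 / 2))
          + 'C(2 * n, n)%:R * 3 ^+ (n + 3) / (32 * (n%:R + 1)).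
Proof.
move=> gf n; have aE := gf_A220910_second_form _ _ _ gf n.
split; last exact: aE.
have [_ weightedE] := first_sumsE R n.
rewrite (eq_bigr (fun k : 'I_n.+1 => (k%:R + 1) * first_term R n k)) => [|k _]; last first.
  by rewrite /first_term /falling /falling_half; ring.
rewrite -/(central_binom R n) -/(first_sum_weighted R n) weightedE aE /second_form.
have := ler0n R n => n_ge0; solve_field.
Qed.
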